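(* Let $(G,* )$ be a metrizable topological group with no isolated points. Then $G$ has ${\sf S}_c(\mathcal{O}_{\sf nbd},\mathcal{O})$ if and only if $G$ has ${\sf S}_c(\mathcal{O}_{\sf nbd},\Lambda)$.
   Context: For a topological group $(G,* )$ with identity $e$ and a neighborhood $U$ of $e$, $\mathcal{O}(U)=\{x*U:x\in G\}$ and $\mathcal{O}_{\sf nbd}=\{\mathcal{O}(U):U\text{ a neighborhood of }e\}$. $\mathcal{O}$ is the collection of all open covers. An open cover is large if each point is contained in infinitely many elements of the cover; $\Lambda$ denotes the collection of large open covers. A family $\mathcal{B}$ refines $\mathcal{A}$ if every member of $\mathcal{B}$ is contained in some member of $\mathcal{A}$. ${\sf S}_c(\mathcal{A},\mathcal{B})$: for each sequence $(A_n:n<\infty)$ of elements of $\mathcal{A}$ there is a sequence $(B_n:n<\infty)$ such that each $B_n$ is a pairwise disjoint family of open sets refining $A_n$ and $\bigcup_nB_n\in\mathcal{B}$. *)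

From Stdlib Require Import Reals List.
Open Scope R_scope.

Definition set (X : Type) := X -> Prop.
Definition setfam (X : Type) := set (set X).

Definition set_eq {X} (A B : set X) : Prop := forall x, A x <-> B x.
Definition subset {X} (A B : set X) : Prop := forall x, A x -> B x.

Definition is_topology {X : Type} (open : setfam X) : Prop :=
  open (fun _ => True) /\
  (forall F : setfam X, (forall U, F U -> open U) ->
      open (fun x => exists U, F U /\ U x)) /\
  (forall U V, open U -> open V -> open (fun x => U x /\ V x)).

Definition is_topological_group {X : Type} (open : setfam X)
  (mul : X -> X -> X) (inv : X -> X) (e : X) : Prop :=
  is_topology open /\
  (forall x y z, mul x (mul y z) = mul (mul x y) z) /\
  (forall x, mul e x = x /\ mul x e = x) /\
  (forall x, mul (inv x) x = e /\ mul x (inv x) = e) /\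
  (* continuity of multiplication G x G -> G (product topology) *)
  (forall (W : set X) x y, open W -> W (mul x y) ->
     exists U V, open U /\ open V /\ U x /\ V y /\
       (forall u v, U u -> V v -> W (mul u v))) /\
  (forall W : set X, open W -> open (fun x => W (inv x))).

Definition metrizable {X : Type} (open : setfam X) : Prop :=
  exists d : X -> X -> R,
    (forall x y, 0 <= d x y) /\
    (forall x y, d x y = 0 <-> x = y) /\
    (forall x y, d x y = d y x) /\
    (forall x y z, d x z <= d x y + d y z) /\
    (forall U : set X, open U <->
       (forall x, U x -> exists eps, 0 < eps /\ forall y, d x y < eps -> U y)).

Definition no_isolated_points {X : Type} (open : setfam X) : Prop :=
  forall x : X, ~ open (fun y => y = x).

Definition ltrans {X : Type} (mul : X -> X -> X) (x : X) (U : set X) : set X :=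
  fun y => exists u, U u /\ y = mul x u.

Definition O_of {X : Type} (mul : X -> X -> X) (U : set X) : setfam X :=
  fun V => exists x, set_eq V (ltrans mul x U).

Definition O_nbd {X : Type} (open : setfam X) (mul : X -> X -> X) (e : X)
  : setfam X -> Prop :=
  fun F => exists U, open U /\ U e /\ F = O_of mul U.

Definition open_cover {X : Type} (open : setfam X) (F : setfam X) : Prop :=
  (forall U, F U -> open U) /\ (forall x, exists U, F U /\ U x).

(* a setfam is finite up to extensional equality of its members *)
Definition finite_family {X : Type} (F : setfam X) : Prop :=
  exists l : list (set X), forall U, F U -> exists V, In V l /\ set_eq U V.

Definition large_cover {X : Type} (open : setfam X) (F : setfam X) : Prop :=
  open_cover open F /\
  forall x, ~ finite_family (fun U => F U /\ U x).

Definition refines {X : Type} (B A : setfam X) : Prop :=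
  forall V, B V -> exists U, A U /\ subset V U.

Definition pairwise_disjoint_open {X : Type} (open : setfam X) (B : setfam X) : Prop :=
  (forall V, B V -> open V) /\
  (forall V W, B V -> B W -> (exists z, V z /\ W z) -> set_eq V W).

Definition S_c {X : Type} (open : setfam X)
  (A B : setfam X -> Prop) : Prop :=
  forall An : nat -> setfam X, (forall n, A (An n)) ->
    exists Bn : nat -> setfam X,
      (forall n, pairwise_disjoint_open open (Bn n) /\ refines (Bn n) (An n)) /\
      B (fun V => exists n, Bn n V).

From Stdlib Require Import Reals List Lra Lia Classical ClassicalEpsilon.
From Stdlib Require Import Arith.Cantor.
Open Scope R_scope.

(* Large covers are open covers, so one direction is monotonicity of S_c in its
   second argument.  For the other, given O(U_0), O(U_1), ..., choose open
   neighbourhoods V_n of e with V_n^-1 V_n inside U_n and inside the ball of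
   radius 1/(n+1) around e.  Split the indices by the Cantor pairing into
   infinitely many rows (k, j), j in nat, and apply S_c(O_nbd, O) to each row.
   The union of all the resulting disjoint refinements refines the original
   sequence, and for every k it contains a cover of G by sets W with
   d(e, x^-1 y) < 1/(k+1) for x, y in W.  Such a family is large: if x were in
   only finitely many members, a whole ball around x would lie in all of them;
   a point y <> x in that ball (G has no isolated points) would then share
   with x members of arbitrarily small "left diameter", forcing x^-1 y = e. *)

Definition metric_for {X : Type} (open : setfam X) (d : X -> X -> R) : Prop :=
  (forall x y, 0 <= d x y) /\
  (forall x y, d x y = 0 <-> x = y) /\
  (forall x y, d x y = d y x) /\
  (forall x y z, d x z <= d x y + d y z) /\
  (forall U : set X, open U <->
     (forall x, U x -> exists eps, 0 < eps /\ forall y, d x y < eps -> U y)).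

Definition left_diam_lt {X : Type} (mul : X -> X -> X) (inv : X -> X) (e : X)
  (d : X -> X -> R) (r : R) (W : set X) : Prop :=
  forall x y, W x -> W y -> d e (mul (inv x) y) < r.

Lemma S_c_mono {X : Type} (open : setfam X) (A B1 B2 : setfam X -> Prop) :
  (forall F, B1 F -> B2 F) -> S_c open A B1 -> S_c open A B2.
Proof.
  intros HB HS An HAn. destruct (HS An HAn) as [Bn [HBn Hcov]].
  exists Bn. split; [exact HBn | exact (HB _ Hcov)].
Qed.

Lemma refines_O_of_mono {X : Type} (mul : X -> X -> X) (B : setfam X)
  (V U : set X) :
  subset V U -> refines B (O_of mul V) -> refines B (O_of mul U).
Proof.
  intros HVU HB W HW. destruct (HB W HW) as [Y [[z Hz] HWY]].
  exists (ltrans mul z U). split.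
  - exists z. intro; tauto.
  - intros x Hx. destruct (proj1 (Hz x) (HWY x Hx)) as [u [Hu ->]].
    exists u. auto.
Qed.

Lemma inv_INR_antitone (n m : nat) :
  (0 < n)%nat -> (n <= m)%nat -> / INR m <= / INR n.
Proof.
  intros Hn Hnm. apply Rinv_le_contravar; [apply lt_0_INR; lia | apply le_INR; lia].
Qed.

Section TopologicalGroup.

Context {X : Type} {open : setfam X} {mul : X -> X -> X} {inv : X -> X} {e : X}.
Hypothesis HG : is_topological_group open mul inv e.

Lemma inv_unit : inv e = e.
Proof.
  destruct HG as (_ & _ & Hid & Hinv & _).
  rewrite <- (proj2 (Hid (inv e))). exact (proj1 (Hinv e)).
Qed.

Lemma mul_inv_cancel_l (x w : X) : mul (inv x) (mul x w) = w.
Proof.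
  destruct HG as (_ & Hassoc & Hid & Hinv & _).
  rewrite Hassoc, (proj1 (Hinv x)). apply Hid.
Qed.

Lemma mul_inv_cancel_r (x w : X) : mul x (mul (inv x) w) = w.
Proof.
  destruct HG as (_ & Hassoc & Hid & Hinv & _).
  rewrite Hassoc, (proj2 (Hinv x)). apply Hid.
Qed.

Lemma inv_translate (z a b : X) : mul (inv (mul z a)) (mul z b) = mul (inv a) b.
Proof.
  destruct HG as (_ & Hassoc & _).
  replace (mul z b) with (mul (mul z a) (mul (inv a) b)).
  - apply mul_inv_cancel_l.
  - rewrite <- Hassoc, mul_inv_cancel_r. reflexivity.
Qed.

Lemma quotient_unit_eq (x y : X) : mul (inv x) y = e -> x = y.
Proof.
  intro Hxy. destruct HG as (_ & _ & Hid & _).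
  rewrite <- (mul_inv_cancel_r x y), Hxy. symmetry. apply Hid.
Qed.

(* Continuity of (a, b) |-> a^-1 b at (e, e): every neighbourhood W of e
   contains V^-1 V for some open neighbourhood V of e. *)
Lemma quotient_nbhd (W : set X) :
  open W -> W e ->
  exists V, open V /\ V e /\ forall a b, V a -> V b -> W (mul (inv a) b).
Proof.
  intros HW He. destruct HG as ([_ [_ Hinter]] & _ & Hid & _ & Hmul & Hinvc).
  assert (Hee : W (mul e e)) by (rewrite (proj1 (Hid e)); exact He).
  destruct (Hmul W e e HW Hee) as (U & V & HU & HV & HUe & HVe & HUV).
  exists (fun x => V x /\ U (inv x)). split; [|split].
  - apply Hinter; [exact HV | apply Hinvc; exact HU].
  - split; [exact HVe | rewrite inv_unit; exact HUe].
  - intros a b [_ Ha] [Hb _]. apply HUV; assumption.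
Qed.

Lemma quotient_nbhd_subset (V W : set X) :
  V e -> (forall a b, V a -> V b -> W (mul (inv a) b)) -> subset V W.
Proof.
  intros HVe HVW b Hb. destruct HG as (_ & _ & Hid & _).
  specialize (HVW e b HVe Hb). rewrite inv_unit, (proj1 (Hid b)) in HVW.
  exact HVW.
Qed.

Lemma translate_quotient (P : set X) (z : X) (V W : set X) :
  (forall a b, V a -> V b -> P (mul (inv a) b)) ->
  subset W (ltrans mul z V) ->
  forall x y, W x -> W y -> P (mul (inv x) y).
Proof.
  intros HV HW x y Hx Hy.
  destruct (HW x Hx) as [a [Ha ->]]. destruct (HW y Hy) as [b [Hb ->]].
  rewrite inv_translate. auto.
Qed.

End TopologicalGroup.

Section MetricSpace.

Context {X : Type} {open : setfam X} {d : X -> X -> R}.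
Hypothesis Hd : metric_for open d.

Lemma ball_open (c : X) (r : R) : open (fun y => d c y < r).
Proof.
  destruct Hd as (_ & _ & _ & Htri & Hopen).
  apply Hopen. intros x Hx. exists (r - d c x). split; [lra|].
  intros y Hy. pose proof (Htri c x y). lra.
Qed.

Lemma dist_pos (x y : X) : x <> y -> 0 < d x y.
Proof.
  intro Hxy. destruct Hd as (Hd0 & Hdeq & _).
  assert (d x y <> 0) by (intro H0; apply Hxy, Hdeq, H0).
  pose proof (Hd0 x y). lra.
Qed.

Lemma finite_open_common_ball (x : X) (F : setfam X) :
  (forall U, F U -> open U /\ U x) -> finite_family F ->
  exists eps, 0 < eps /\ forall U z, F U -> d x z < eps -> U z.
Proof.
  intros HF [l Hl]. destruct Hd as (_ & _ & _ & _ & Hopen).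
  assert (Hball : exists eps, 0 < eps /\ forall V z, In V l ->
            (exists U, F U /\ set_eq U V) -> d x z < eps -> V z).
  { clear Hl. induction l as [|V0 l [eps [Heps Hl]]].
    - exists 1. split; [lra | intros V z []].
    - destruct (classic (exists U, F U /\ set_eq U V0)) as [[U [HU HUV]] | Hno].
      + destruct (HF U HU) as [HUo HUx].
        destruct (proj1 (Hopen U) HUo x HUx) as [eps' [Heps' HU']].
        exists (Rmin eps eps'). split; [apply Rmin_pos; assumption|].
        intros V z [<- | Hin] HV Hz.
        * apply HUV, HU'. pose proof (Rmin_r eps eps'). lra.
        * apply (Hl V z Hin HV). pose proof (Rmin_l eps eps'). lra.
      + exists eps. split; [exact Heps|].
        intros V z [<- | Hin] HV Hz; [contradiction | exact (Hl V z Hin HV Hz)]. }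
  destruct Hball as [eps [Heps Hball]]. exists eps. split; [exact Heps|].
  intros U z HU Hz. destruct (Hl U HU) as [V [Hin HUV]].
  apply HUV. apply (Hball V z Hin); [exists U; auto | exact Hz].
Qed.

Lemma nonisolated_near_point (x : X) (eps : R) :
  no_isolated_points open -> 0 < eps -> exists y, d x y < eps /\ y <> x.
Proof.
  intros Hniso Heps. destruct Hd as (_ & _ & _ & _ & Hopen).
  apply NNPP. intro Hno. apply (Hniso x), Hopen. intros x' ->.
  exists eps. split; [exact Heps|]. intros y Hy.
  apply NNPP. intro Hne. apply Hno. exists y. auto.
Qed.

End MetricSpace.

Lemma refines_O_of_left_diam {X : Type} {open : setfam X}
  {mul : X -> X -> X} {inv : X -> X} {e : X} {d : X -> X -> R}
  (HG : is_topological_group open mul inv e) (B : setfam X) (V : set X) (r : R) :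
  (forall a b, V a -> V b -> d e (mul (inv a) b) < r) ->
  refines B (O_of mul V) -> forall W, B W -> left_diam_lt mul inv e d r W.
Proof.
  intros HV HB W HW x y Hx Hy. destruct (HB W HW) as [Y [[z Hz] HWY]].
  apply (translate_quotient HG (fun c => d e c < r) z V W); [exact HV | | exact Hx | exact Hy].
  intros w Hw. apply Hz, HWY, Hw.
Qed.

Lemma left_diam_lt_mono {X : Type} (mul : X -> X -> X) (inv : X -> X) (e : X)
  (d : X -> X -> R) (r r' : R) (W : set X) :
  r <= r' -> left_diam_lt mul inv e d r W -> left_diam_lt mul inv e d r' W.
Proof. intros Hr HW x y Hx Hy. specialize (HW x y Hx Hy). lra. Qed.

Lemma large_of_small_subcovers {X : Type} (open : setfam X)
  (mul : X -> X -> X) (inv : X -> X) (e : X) (d : X -> X -> R) (F : setfam X) :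
  is_topological_group open mul inv e -> metric_for open d ->
  no_isolated_points open ->
  (forall U, F U -> open U) ->
  (forall (k : nat) (x : X),
     exists W, F W /\ W x /\ left_diam_lt mul inv e d (/ INR (S k)) W) ->
  large_cover open F.
Proof.
  intros HG Hd Hniso HFopen Hsmall. split.
  - split; [exact HFopen|]. intro x.
    destruct (Hsmall 0%nat x) as [W [HW [Hx _]]]. exists W. auto.
  - intros x Hfin.
    destruct (finite_open_common_ball Hd x _
                (fun U HU => conj (HFopen U (proj1 HU)) (proj2 HU)) Hfin)
      as [eps [Heps Hball]].
    destruct (nonisolated_near_point Hd x eps Hniso Heps) as [y [Hxy Hyx]].
    assert (Hc : 0 < d e (mul (inv x) y)).
    { apply (dist_pos Hd). intro Hec. apply Hyx.
      symmetry. apply (quotient_unit_eq HG). auto. }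
    destruct (archimed_cor1 _ Hc) as [N [HN HN0]].
    destruct (Hsmall N x) as [W [HW [Hx HWsmall]]].
    (* W is one of the finitely many members containing x, so it contains y *)
    assert (Hy : W y) by exact (Hball W y (conj HW Hx) Hxy).
    pose proof (HWsmall x y Hx Hy) as Hlt.
    pose proof (inv_INR_antitone N (S N) HN0 (Nat.le_succ_diag_r N)). lra.
Qed.

Lemma shrinking_nbhd {X : Type} (open : setfam X)
  (mul : X -> X -> X) (inv : X -> X) (e : X) (d : X -> X -> R)
  (A : setfam X) (r : R) :
  is_topological_group open mul inv e -> metric_for open d -> 0 < r ->
  O_nbd open mul e A ->
  exists V : set X,
    O_nbd open mul e (O_of mul V) /\
    (forall B, refines B (O_of mul V) -> refines B A) /\
    (forall a b, V a -> V b -> d e (mul (inv a) b) < r).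
Proof.
  intros HG Hd Hr [U [HU [HUe ->]]].
  destruct (quotient_nbhd HG (fun x => U x /\ d e x < r)) as [V [HV [HVe HVq]]].
  - destruct HG as ([_ [_ Hinter]] & _). apply Hinter; [exact HU | apply (ball_open Hd)].
  - split; [exact HUe|]. destruct Hd as (_ & Hdeq & _).
    rewrite (proj2 (Hdeq e e) eq_refl). exact Hr.
  - exists V. split; [|split].
    + exists V. auto.
    + intro B. apply refines_O_of_mono. intros x Hx.
      exact (proj1 (quotient_nbhd_subset HG V (fun y => U y /\ d e y < r) HVe HVq x Hx)).
    + intros a b Ha Hb. exact (proj2 (HVq a b Ha Hb)).
Qed.

Lemma S_c_cover_to_large {X : Type} (open : setfam X)
  (mul : X -> X -> X) (inv : X -> X) (e : X) :
  is_topological_group open mul inv e -> metrizable open ->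
  no_isolated_points open ->
  S_c open (O_nbd open mul e) (open_cover open) ->
  S_c open (O_nbd open mul e) (large_cover open).
Proof.
  intros HG [d Hd] Hniso HS An HAn.
  assert (Hshrink : forall n, exists V, O_nbd open mul e (O_of mul V) /\
            (forall B, refines B (O_of mul V) -> refines B (An n)) /\
            (forall a b, V a -> V b -> d e (mul (inv a) b) < / INR (S n))).
  { intro n. apply (shrinking_nbhd open mul inv e d); [assumption.. | |].
    - apply Rinv_0_lt_compat, lt_0_INR. lia.
    - exact (HAn n). }
  destruct (choice _ Hshrink) as [Vf HVf].
  (* apply S_c(O_nbd, O) to each row k of the Cantor enumeration *)
  assert (Hrows : forall k, exists Bk : nat -> setfam X,
     (forall j, pairwise_disjoint_open open (Bk j) /\
                refines (Bk j) (O_of mul (Vf (to_nat (k, j))))) /\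
     open_cover open (fun W => exists j, Bk j W)).
  { intro k. apply HS. intro j. apply (HVf (to_nat (k, j))). }
  destruct (choice _ Hrows) as [Bf HBf].
  exists (fun m => Bf (fst (of_nat m)) (snd (of_nat m))). split.
  - intro m. destruct (proj1 (HBf (fst (of_nat m))) (snd (of_nat m))) as [Hpd Href].
    split; [exact Hpd|].
    rewrite <- surjective_pairing, cancel_to_of in Href. exact (proj1 (proj2 (HVf m)) _ Href).
  - apply (large_of_small_subcovers open mul inv e d); [assumption..| |].
    + intros W [m Hm]. exact (proj1 (proj1 (proj1 (HBf (fst (of_nat m))) _)) W Hm).
    + intros k x. destruct (HBf k) as [Hrow [_ Hcov]].
      destruct (Hcov x) as [W [[j Hj] Hx]]. exists W. split; [|split; [exact Hx|]].
      * exists (to_nat (k, j)). rewrite cancel_of_to. exact Hj.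
      * (* W refines O(V_m) with m = to_nat (k, j) >= k *)
        apply (left_diam_lt_mono mul inv e d (/ INR (S (to_nat (k, j))))).
        -- apply inv_INR_antitone; [lia|]. pose proof (to_nat_non_decreasing k j). lia.
        -- exact (refines_O_of_left_diam HG _ _ _ (proj2 (proj2 (HVf _)))
                    (proj2 (Hrow j)) W Hj).
Qed.

Theorem theorem3p6 (X : Type) (open : setfam X)
  (mul : X -> X -> X) (inv : X -> X) (e : X) :
  is_topological_group open mul inv e ->
  metrizable open ->
  no_isolated_points open ->
  (S_c open (O_nbd open mul e) (open_cover open) <->
   S_c open (O_nbd open mul e) (large_cover open)).
Proof.
  intros HG Hm Hniso. split.
  - exact (S_c_cover_to_large open mul inv e HG Hm Hniso).
  - apply S_c_mono. intros F HF. exact (proj1 HF).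
Qed.
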